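(* Let $\mathcal F$ be a Finsler function on $\mathbb R^n$, and let $((x^i),(y^i))$ be the coordinates on $T\mathbb R^n$ induced by the canonical coordinates of $\mathbb R^n$. Then $(\mathbb R^n,\mathcal F)$ is a Minkowski space (i.e. $\mathcal F(p,v)$ does not depend on $p$) if and only if $$\frac{\partial^2\mathcal F^2}{\partial x^k\partial y^i}\,y^k=\frac12\,\frac{\partial^2\mathcal F^2}{\partial x^i\partial y^k}\,y^k,\qquad i=1,\dots,n,$$ holds on $\mathbb R^n\times(\mathbb R^n\setminus\{0\})$.
   Context: A Finsler function on $\mathbb R^n$ is $\mathcal F\colon\mathbb R^n\times\mathbb R^n\to\mathbb R$ smooth and positive on $\{(p,v):v\neq0\}$, positively $1$-homogeneous in $v$, and strongly convex ($\partial^2\mathcal F^2/\partial y^i\partial y^j$ positive definite for $v\ne0$). Summation over repeated indices. *)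

From Stdlib Require Import Reals ClassicalEpsilon.
From mathcomp Require Import ssreflect ssrfun ssrbool eqtype ssrnat seq fintype bigop.
Set Implicit Arguments.
Unset Strict Implicit.

Local Open Scope R_scope.

Definition vec (n : nat) := 'I_n -> R.
(* Points of T R^n = R^n x R^n, coordinates ((x^i),(y^i)) *)
Definition pt (n : nat) := (vec n * vec n)%type.
(* Coordinate directions: inl i = x^i, inr i = y^i *)
Definition dir (n : nat) := ('I_n + 'I_n)%type.

Definition coord n (z : pt n) (d : dir n) : R :=
  match d with inl i => z.1 i | inr i => z.2 i end.

Definition upd n (z : pt n) (d : dir n) (t : R) : pt n :=
  match d with
  | inl i => (fun j => if j == i then t else z.1 j, z.2)
  | inr i => (z.1, fun j => if j == i then t else z.2 j)
  end.

Definition pder n (g : pt n -> R) (d : dir n) (z : pt n) : R :=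
  epsilon (inhabits 0)
    (fun l => derivable_pt_lim (fun t => g (upd z d t)) (coord z d) l).

(* Iterated partial derivatives: the head of the list is applied last. *)
Fixpoint ipder n (g : pt n -> R) (l : list (dir n)) : pt n -> R :=
  match l with
  | nil => g
  | d :: l' => pder (ipder g l') d
  end.

Definition continuous_on n (U : pt n -> Prop) (g : pt n -> R) : Prop :=
  forall z, U z -> forall eps, 0 < eps -> exists del, 0 < del /\
    forall w, U w -> (forall d, Rabs (coord w d - coord z d) < del) ->
      Rabs (g w - g z) < eps.

Definition smooth_on n (U : pt n -> Prop) (g : pt n -> R) : Prop :=
  forall (l : list (dir n)),
    continuous_on U (ipder g l) /\
    forall d z, U z ->
      derivable_pt_lim (fun t => ipder g l (upd z d t)) (coord z d)
        (ipder g (d :: l) z).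

Definition slit n (z : pt n) : Prop := z.2 <> (fun _ => 0).

Definition uncurry n (F : vec n -> vec n -> R) : pt n -> R := fun z => F z.1 z.2.

Definition Fsq n (F : vec n -> vec n -> R) : pt n -> R := fun z => (F z.1 z.2) ^ 2.

Definition sumI n (f : 'I_n -> R) : R := \big[Rplus/0]_(i < n) f i.

Definition is_finsler n (F : vec n -> vec n -> R) : Prop :=
  smooth_on (@slit n) (uncurry F) /\
  (forall p v, v <> (fun _ => 0) -> 0 < F p v) /\
  (forall p v (lam : R), 0 < lam -> F p (fun i => lam * v i) = lam * F p v) /\
  (forall p v, v <> (fun _ => 0) ->
     forall w : vec n, w <> (fun _ => 0) ->
       0 < sumI (fun i => sumI (fun j =>
             ipder (Fsq F) [:: inr j; inr i] (p, v) * w i * w j))).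

Definition is_minkowski n (F : vec n -> vec n -> R) : Prop :=
  forall p q v, F p v = F q v.

(* d^2 F^2 / dx^a dy^b at z, i.e. d/dx^a (dF^2/dy^b) *)
Definition dxdy n (F : vec n -> vec n -> R) (a b : 'I_n) (z : pt n) : R :=
  ipder (Fsq F) [:: inl a; inr b] z.

(* Let S = y^k dF/dx^k.  Since d^2 F^2/dx^a dy^b = 2 (F_{x^a} F_{y^b} + F F_{x^a y^b})
   and, by 1-homogeneity, y^k F_{y^k} = F and y^k F_{x^i y^k} = F_{x^i} (Euler),
   the condition reads  F_{y^i} S + F y^k F_{x^k y^i} = F F_{x^i}.  Contracting
   with y^i gives F S = 0, so S vanishes on the slit bundle.  Differentiating
   S = 0 in y^i and exchanging the mixed partials (Schwarz) gives
   y^k F_{x^k y^i} = - F_{x^i}, hence F F_{x^i} = 0 and F_x = 0 as F > 0; so F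
   does not depend on x.  Conversely for a Minkowski F every mixed derivative
   vanishes.  Euler's relation needs a chain rule
   along lines in the fibre, proved by moving one coordinate at a time. *)

From Pilot Require Import Defs.
From Stdlib Require Import Reals Lra ClassicalEpsilon FunctionalExtensionality Classical.
From HB Require Import structures.
From mathcomp Require Import ssreflect ssrfun ssrbool eqtype ssrnat seq fintype bigop.
From Coquelicot Require Import Coquelicot.
Set Implicit Arguments.
Unset Strict Implicit.
Local Open Scope R_scope.

Lemma Rplus_assoc_law : associative Rplus. Proof. by move=> *; ring. Qed.

HB.instance Definition _ :=
  Monoid.isComLaw.Build R 0 Rplus Rplus_assoc_law Rplus_comm Rplus_0_l.
HB.instance Definition _ := Monoid.isMulLaw.Build R 0 Rmult Rmult_0_l Rmult_0_r.
HB.instance Definition _ :=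
  Monoid.isAddLaw.Build R Rmult Rplus Rmult_plus_distr_r Rmult_plus_distr_l.

Section FiniteSums.
Variable n : nat.
Implicit Types f g : 'I_n -> R.

Lemma eq_sumI f g : (forall i, f i = g i) -> sumI f = sumI g.
Proof. by move=> fg; apply: eq_bigr => i _. Qed.

Lemma sumI_add f g : sumI (fun i => f i + g i) = sumI f + sumI g.
Proof. exact: big_split. Qed.

Lemma sumI_scal c f : sumI (fun i => c * f i) = c * sumI f.
Proof. by rewrite /sumI big_distrr. Qed.

Lemma sumI_exchange (f : 'I_n -> 'I_n -> R) :
  sumI (fun i => sumI (fun j => f i j)) = sumI (fun j => sumI (fun i => f i j)).
Proof. exact: exchange_big. Qed.

Lemma sumI_exchange_weighted (a b : 'I_n -> R) (f : 'I_n -> 'I_n -> R) :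
  sumI (fun i => a i * sumI (fun k => b k * f i k))
  = sumI (fun k => b k * sumI (fun i => a i * f i k)).
Proof.
rewrite (eq_sumI (g := fun i => sumI (fun k => a i * (b k * f i k)))); last first.
  by move=> i; rewrite sumI_scal.
rewrite sumI_exchange; apply: eq_sumI => k; rewrite -sumI_scal; apply: eq_sumI => i; ring.
Qed.

Lemma sumI_delta f i : sumI (fun k => if k == i then f k else 0) = f i.
Proof. by rewrite /sumI (bigD1 i) //= eqxx big1 ?Rplus_0_r // => j /negbTE ->. Qed.

Lemma sumI_ge_term f i : (forall j, 0 <= f j) -> f i <= sumI f.
Proof.
move=> f_ge0; rewrite /sumI (bigD1 i) //= -{1}[f i]Rplus_0_r.
apply: Rplus_le_compat_l; elim/big_ind: _ => // *; lra.
Qed.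

Lemma sumI_telescope (u : nat -> R) :
  sumI (fun o : 'I_n => u o.+1 - u o) = u n - u 0%N.
Proof.
rewrite /sumI; elim: n => [|m IH]; first by rewrite big_ord0; ring.
by rewrite big_ord_recr /= IH; ring.
Qed.

Lemma derivable_pt_lim_sumI (f : 'I_n -> R -> R) (l : 'I_n -> R) x :
  (forall k, derivable_pt_lim (f k) x (l k)) ->
  derivable_pt_lim (fun t => sumI (fun k => f k t)) x (sumI l).
Proof.
move=> fl; rewrite /sumI; elim: (index_enum _) => [|a r IH].
  rewrite big_nil; apply: (derivable_pt_lim_ext (fun _ => 0)).
    by move=> t; rewrite big_nil.
  exact: derivable_pt_lim_const.
rewrite big_cons; apply: (derivable_pt_lim_ext (fun t => f a t + \big[Rplus/0]_(k <- r) f k t)).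
  by move=> t; rewrite big_cons.
exact: derivable_pt_lim_plus.
Qed.

End FiniteSums.

Section Coordinates.
Variable n : nat.
Implicit Types (z : pt n) (d : dir n).

Lemma upd_upd z d a b : upd (upd z d a) d b = upd z d b.
Proof.
by case: d => i /=; congr pair; apply: functional_extensionality => j; case: (j == i).
Qed.

Lemma coord_upd z d t : coord (upd z d t) d = t.
Proof. by case: d => i /=; rewrite eqxx. Qed.

Lemma upd_coord z d : upd z d (coord z d) = z.
Proof.
case: z => x y; case: d => i /=; congr pair;
  by apply: functional_extensionality => j; case: eqP => [->|].
Qed.

Lemma slit_nbhd z : slit z -> exists del, 0 < del /\
  forall w : pt n, (forall j, Rabs (w.2 j - z.2 j) < del) -> slit w.
Proof.
move=> z_slit; have [j zj_neq0] : exists j, z.2 j <> 0.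
  apply: NNPP => all0; apply: z_slit; apply: functional_extensionality => j.
  by apply: NNPP => zj; apply: all0; exists j.
exists (Rabs (z.2 j)); split; first exact: Rabs_pos_lt.
move=> w near_wz w0; have := near_wz j; rewrite w0 /= Rminus_0_l Rabs_Ropp; lra.
Qed.

Definition mixv (m : nat) (a b : vec n) : vec n :=
  fun j => if (j < m)%N then b j else a j.

Lemma mixv0 a b : mixv 0 a b = a.
Proof. by apply: functional_extensionality => j; rewrite /mixv ltn0. Qed.

Lemma mixvn a b : mixv n a b = b.
Proof. by apply: functional_extensionality => j; rewrite /mixv ltn_ord. Qed.

Lemma mixv_at a b (o : 'I_n) : mixv o a b o = a o.
Proof. by rewrite /mixv ltnn. Qed.

Lemma mixvS a b (o : 'I_n) :
  mixv o.+1 a b = fun j => if j == o then b o else mixv o a b j.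
Proof.
apply: functional_extensionality => j; rewrite /mixv ltnS leq_eqVlt.
case: (j =P o) => [->|ne_jo]; first by rewrite eqxx.
by have /negbTE-> : val j != val o by apply/eqP => /val_inj.
Qed.

Lemma upd_mixvS_r (x a b : vec n) (o : 'I_n) :
  upd (x, mixv o a b) (inr o) (b o) = (x, mixv o.+1 a b).
Proof. by rewrite mixvS. Qed.

Lemma upd_mixvS_l (y a b : vec n) (o : 'I_n) :
  upd (mixv o a b, y) (inl o) (b o) = (mixv o.+1 a b, y).
Proof. by rewrite mixvS. Qed.

Lemma upd_mixv_at_r (x a b : vec n) (o : 'I_n) :
  upd (x, mixv o a b) (inr o) (a o) = (x, mixv o a b).
Proof. by rewrite -[in a o](mixv_at a b) (upd_coord (x, _) (inr o)). Qed.

Lemma upd_mixv_at_l (y a b : vec n) (o : 'I_n) :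
  upd (mixv o a b, y) (inl o) (a o) = (mixv o a b, y).
Proof. by rewrite -[in a o](mixv_at a b) (upd_coord (_, y) (inl o)). Qed.

Lemma sumI_mixv_telescope (u : vec n -> R) a b :
  u b = u a + sumI (fun o : 'I_n => u (mixv o.+1 a b) - u (mixv o a b)).
Proof. by rewrite (@sumI_telescope n (fun m => u (mixv m a b))) mixv0 mixvn; ring. Qed.

End Coordinates.

Lemma pder_eq n (g : pt n -> R) d z l :
  derivable_pt_lim (fun t => g (upd z d t)) (coord z d) l -> pder g d z = l.
Proof.
move=> gl; apply: (uniqueness_limite _ _ _ _ _ gl).
exact: (epsilon_spec (inhabits 0) (fun l => derivable_pt_lim _ _ l) (ex_intro _ l gl)).
Qed.

Lemma derivable_pt_lim_sqr (f : R -> R) x l : derivable_pt_lim f x l ->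
  derivable_pt_lim (fun t => f t ^ 2) x (2 * f x * l).
Proof.
move=> fl; apply: (derivable_pt_lim_ext (fun t => f t * f t)); first by move=> t; ring.
by have := derivable_pt_lim_mult _ _ _ _ _ fl fl; congr derivable_pt_lim; ring.
Qed.

Lemma derivable_pt_lim_ext_loc (f g : R -> R) x l eta : 0 < eta ->
  (forall t, Rabs (t - x) < eta -> f t = g t) ->
  derivable_pt_lim f x l -> derivable_pt_lim g x l.
Proof.
move=> eta_gt0 fg /is_derive_Reals fl; apply/is_derive_Reals.
by apply: is_derive_ext_loc fl; exists (mkposreal _ eta_gt0) => t; apply: fg.
Qed.

Lemma derivable_pt_lim0_const (f : R -> R) a b :
  (forall t, derivable_pt_lim f t 0) -> f b = f a.
Proof.
move=> f'0; have bound : Rabs (f b - f a) <= 0 * Rabs (b - a).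
  apply: (@bounded_variation f (fun _ => 0)) => t _.
  by split; [apply/is_derive_Reals | rewrite Rabs_R0; lra].
rewrite Rmult_0_l in bound; apply: Rminus_diag_uniq; apply: Rabs_eq_0.
exact: Rle_antisym bound (Rabs_pos _).
Qed.

(* The mean value inequality applied to [s |-> f h s - L s]. *)
Lemma derivable_pt_lim_increment (f f' : R -> R -> R) x0 a L :
  (forall eps, 0 < eps -> exists del, 0 < del /\
     forall h s, Rabs h < del -> Rabs (s - x0) <= Rabs (h * a) ->
       derivable_pt_lim (f h) s (f' h s) /\ Rabs (f' h s - L) < eps) ->
  derivable_pt_lim (fun h => f h (x0 + h * a) - f h x0) 0 (a * L).
Proof.
move=> slopes eps eps_gt0.
have D_gt0 : 0 < eps / (Rabs a + 1) by apply: Rdiv_lt_0_compat => //; have := Rabs_pos a; lra.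
have [del [del_gt0 near]] := slopes _ D_gt0.
exists (mkposreal _ del_gt0) => h h_neq0 /= h_lt.
rewrite Rplus_0_l Rmult_0_l Rplus_0_r Rminus_diag Rminus_0_r.
have bound : Rabs (f h (x0 + h * a) - L * (x0 + h * a) - (f h x0 - L * x0))
             <= eps / (Rabs a + 1) * Rabs (x0 + h * a - x0).
  apply: (@bounded_variation (fun s => f h s - L * s) (fun s => f' h s - L)) => t.
  have -> : x0 + h * a - x0 = h * a by ring.
  move=> /(near h t h_lt) [ft ft_lt].
  split; last lra.
  apply/is_derive_Reals; apply: derivable_pt_lim_minus => //.
  by have := derivable_pt_lim_scal _ L _ _ (derivable_pt_lim_id t); rewrite Rmult_1_r.
move: bound; have -> : x0 + h * a - x0 = h * a by ring.
have -> : f h (x0 + h * a) - L * (x0 + h * a) - (f h x0 - L * x0)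
        = h * ((f h (x0 + h * a) - f h x0) / h - a * L) by field.
rewrite !Rabs_mult => bound.
have h_pos : 0 < Rabs h by apply: Rabs_pos_lt.
have bound' : Rabs ((f h (x0 + h * a) - f h x0) / h - a * L) <= eps / (Rabs a + 1) * Rabs a by nra.
apply: Rle_lt_trans bound' _.
have a_ge0 := Rabs_pos a.
apply: (Rmult_lt_reg_r (Rabs a + 1)); first lra.
by field_simplify; lra.
Qed.

Lemma shift_mixv_near n (z : pt n) (w : vec n) (o : 'I_n) del : 0 < del ->
  exists eta, 0 < eta /\ forall h s, Rabs h < eta -> Rabs (s - z.2 o) <= Rabs (h * w o) ->
    forall d, Rabs (coord (upd (z.1, mixv o z.2 (fun j => z.2 j + h * w j)) (inr o) s) d
                    - coord z d) < del.
Proof.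
move=> del_gt0; pose M := 1 + sumI (fun j => Rabs (w j)).
have w_lt j : Rabs (w j) < M.
  by have := @sumI_ge_term _ (fun j => Rabs (w j)) j (fun i => Rabs_pos _); rewrite /M; lra.
have M_gt0 : 0 < M by have := w_lt o; have := Rabs_pos (w o); lra.
exists (del / M); split=> [|h s h_lt s_near]; first exact: Rdiv_lt_0_compat.
have hM : Rabs h * M < del by exact/Rlt_div_r.
have hw j : Rabs (h * w j) < del.
  by rewrite Rabs_mult; have := Rabs_pos h; have := w_lt j; nra.
have h_ge0 := Rabs_pos h.
case=> j /=; first by rewrite Rminus_diag Rabs_R0.
case: eqP => [->|_]; first by have := hw o; lra.
rewrite /mixv; case: (j < o)%N; last by rewrite Rminus_diag Rabs_R0.
by rewrite Rplus_minus_l.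
Qed.

Section FibreChainRule.
Variables (n : nat) (g : pt n -> R).
Hypothesis g_dy : forall k z, slit z ->
  derivable_pt_lim (fun t => g (upd z (inr k) t)) (coord z (inr k)) (ipder g [:: inr k] z).
Hypothesis g_dy_cont : forall k, Defs.continuous_on (@slit n) (ipder g [:: inr k]).

(* Moving the fibre coordinates one at a time, each step is handled by
   [derivable_pt_lim_increment]; continuity of the partial derivatives makes
   the slopes converge. *)
Lemma derivable_pt_lim_fibre_shift (z : pt n) (w : vec n) : slit z ->
  derivable_pt_lim (fun t => g (z.1, fun j => z.2 j + t * w j)) 0
    (sumI (fun k => w k * ipder g [:: inr k] z)).
Proof.
case: z => x y z_slit.
pose b t : vec n := fun j => y j + t * w j.
pose P (o : 'I_n) t s := upd (x, mixv o y (b t)) (inr o) s.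
apply: (derivable_pt_lim_ext
  (fun t => g (x, y) + sumI (fun o => g (P o t (b t o)) - g (P o t (y o))))).
  by move=> t; rewrite (sumI_mixv_telescope (fun v => g (x, v)) y (b t));
    congr (_ + _); apply: eq_sumI => o; rewrite /P upd_mixvS_r upd_mixv_at_r.
rewrite -[sumI _]Rplus_0_l; apply: derivable_pt_lim_plus; first exact: derivable_pt_lim_const.
apply: derivable_pt_lim_sumI => o.
apply: (@derivable_pt_lim_increment (fun t s => g (P o t s))
                                    (fun t s => ipder g [:: inr o] (P o t s))) => eps eps_gt0.
have [del_c [del_c_gt0 cont]] := g_dy_cont o z_slit eps_gt0.
have [del_s [del_s_gt0 slit_near]] := slit_nbhd z_slit.
have [eta [eta_gt0 near]] := shift_mixv_near (x, y) w o (Rmin_pos _ _ del_c_gt0 del_s_gt0).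
exists eta; split=> // h s h_lt s_near.
have P_near d : Rabs (coord (P o h s) d - coord (x, y) d) < Rmin del_c del_s by exact: near.
have P_slit : slit (P o h s).
  apply: slit_near => j; apply: Rlt_le_trans (P_near (inr j)) _; exact: Rmin_r.
split; last by apply: cont => // d; apply: Rlt_le_trans (P_near d) _; exact: Rmin_l.
by have := g_dy o P_slit; rewrite coord_upd; apply: derivable_pt_lim_ext => t; rewrite upd_upd.
Qed.

End FibreChainRule.

(* Coquelicot's [Schwarz] applied to the slice [(u, v) |-> g (Q u v)] through [z]
   in the variables [x^k] and [y^i]; [del0] keeps the slice inside the slit bundle. *)
Section MixedPartials.
Variables (n : nat) (g : pt n -> R) (z : pt n) (k i : 'I_n) (del0 : R).
Hypothesis g_smooth : smooth_on (@slit n) g.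
Hypothesis z_slit : slit z.
Hypothesis del0_gt0 : 0 < del0.
Hypothesis del0_slit :
  forall w : pt n, (forall j, Rabs (w.2 j - z.2 j) < del0) -> slit w.

Let Q u v := upd (upd z (inl k) u) (inr i) v.

Let Q_slit u v : Rabs (v - z.2 i) < del0 -> slit (Q u v).
Proof.
move=> v_near; apply: del0_slit => j /=.
by case: eqP => [->//|_]; rewrite Rminus_diag Rabs_R0.
Qed.

Let Q_upd_l u v t : upd (Q u v) (inl k) t = Q t v.
Proof. by congr pair; apply: functional_extensionality => j /=; case: (j == k). Qed.

Let Q_upd_r u v t : upd (Q u v) (inr i) t = Q u t.
Proof. exact: upd_upd. Qed.

Let coord_Q_l u v : coord (Q u v) (inl k) = u.
Proof. by rewrite /= eqxx. Qed.

Let Q_center : Q (z.1 k) (z.2 i) = z.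
Proof. by rewrite /Q (upd_coord z (inl k)) (upd_coord z (inr i)). Qed.

Let is_derive_Q_l l u v : Rabs (v - z.2 i) < del0 ->
  is_derive (fun t => ipder g l (Q t v)) u (ipder g (inl k :: l) (Q u v)).
Proof.
move=> /(@Q_slit u v) /((g_smooth l).2 (inl k)) /is_derive_Reals.
by rewrite coord_Q_l; apply: is_derive_ext => t; rewrite Q_upd_l.
Qed.

Let is_derive_Q_r l u v : Rabs (v - z.2 i) < del0 ->
  is_derive (fun t => ipder g l (Q u t)) v (ipder g (inr i :: l) (Q u v)).
Proof.
move=> /(@Q_slit u v) /((g_smooth l).2 (inr i)) /is_derive_Reals.
by rewrite coord_upd; apply: is_derive_ext => t; rewrite Q_upd_r.
Qed.

Let Derive_Q_r u v : Rabs (v - z.2 i) < del0 ->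
  Derive (fun t => g (Q u t)) v = ipder g [:: inr i] (Q u v).
Proof. by move=> /(is_derive_Q_r [::] u) /is_derive_unique. Qed.

Let Derive_Q_l u v : Rabs (v - z.2 i) < del0 ->
  Derive (fun t => g (Q t v)) u = ipder g [:: inl k] (Q u v).
Proof. by move=> /(is_derive_Q_l [::] u) /is_derive_unique. Qed.

Let is_derive_Q_rl u v : Rabs (v - z.2 i) < del0 ->
  is_derive (fun t => Derive (fun s => g (Q t s)) v) u (ipder g [:: inl k; inr i] (Q u v)).
Proof.
move=> v_near; apply: is_derive_ext (is_derive_Q_l [:: inr i] u v_near) => t.
by rewrite Derive_Q_r.
Qed.

Let is_derive_Q_lr u v : Rabs (v - z.2 i) < del0 ->
  is_derive (fun t => Derive (fun s => g (Q s t)) u) v (ipder g [:: inr i; inl k] (Q u v)).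
Proof.
move=> v_near; apply: is_derive_ext_loc (is_derive_Q_r [:: inl k] u v_near).
have r_gt0 : 0 < del0 - Rabs (v - z.2 i) by lra.
exists (mkposreal _ r_gt0) => t t_near; rewrite Derive_Q_l //.
change (Rabs (t - v) < del0 - Rabs (v - z.2 i)) in t_near.
have := Rabs_triang (t - v) (v - z.2 i).
have -> : t - v + (v - z.2 i) = t - z.2 i by ring.
lra.
Qed.

Let continuity_2d_Q l (D : R -> R -> R) :
  (forall u v, Rabs (v - z.2 i) < del0 -> D u v = ipder g l (Q u v)) ->
  continuity_2d_pt D (z.1 k) (z.2 i).
Proof.
move=> DQ eps; have [del [del_gt0 cont]] := (g_smooth l).1 z z_slit eps (cond_pos eps).
exists (mkposreal _ (Rmin_pos _ _ del_gt0 del0_gt0)) => u v /= u_near v_near.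
have v_near0 : Rabs (v - z.2 i) < del0 by apply: Rlt_le_trans v_near _; apply: Rmin_r.
have z_near0 : Rabs (z.2 i - z.2 i) < del0 by rewrite Rminus_diag Rabs_R0.
rewrite !DQ // Q_center; apply: cont; first exact: Q_slit.
have [u_del v_del] : Rabs (u - z.1 k) < del /\ Rabs (v - z.2 i) < del.
  by split; [apply: Rlt_le_trans u_near _ | apply: Rlt_le_trans v_near _]; apply: Rmin_l.
by case=> j /=; case: eqP => [->//|_]; rewrite Rminus_diag Rabs_R0.
Qed.

Lemma ipder_comm_y_x_loc : ipder g [:: inr i; inl k] z = ipder g [:: inl k; inr i] z.
Proof.
have z_near : Rabs (z.2 i - z.2 i) < del0 by rewrite Rminus_diag Rabs_R0.
have <- : Derive (fun u => Derive (fun t => g (Q u t)) (z.2 i)) (z.1 k)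
          = ipder g [:: inl k; inr i] z.
  by rewrite (is_derive_unique _ _ _ (is_derive_Q_rl _ z_near)) Q_center.
have <- : Derive (fun v => Derive (fun t => g (Q t v)) (z.1 k)) (z.2 i)
          = ipder g [:: inr i; inl k] z.
  by rewrite (is_derive_unique _ _ _ (is_derive_Q_lr _ z_near)) Q_center.
symmetry; apply: (@Schwarz (fun u v => g (Q u v))).
- exists (mkposreal _ del0_gt0) => u v _ /= v_near.
  by split; [|split; [|split]]; eexists; [exact: (is_derive_Q_l [::] u v_near)
    | exact: (is_derive_Q_r [::] u v_near) | exact: is_derive_Q_rl | exact: is_derive_Q_lr].
- by apply: (@continuity_2d_Q [:: inl k; inr i]) => u v /is_derive_Q_rl /is_derive_unique.
- by apply: (@continuity_2d_Q [:: inr i; inl k]) => u v /is_derive_Q_lr /is_derive_unique.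
Qed.

End MixedPartials.

Lemma ipder_comm_y_x n (g : pt n -> R) (z : pt n) (k i : 'I_n) :
  smooth_on (@slit n) g -> slit z ->
  ipder g [:: inr i; inl k] z = ipder g [:: inl k; inr i] z.
Proof.
move=> g_smooth z_slit; have [del [del_gt0 del_slit]] := slit_nbhd z_slit.
exact: (ipder_comm_y_x_loc k i g_smooth z_slit del_gt0 del_slit).
Qed.

Section Finsler.
Variables (n : nat) (F : vec n -> vec n -> R).
Hypothesis F_smooth : smooth_on (@slit n) (uncurry F).
Hypothesis F_hom : forall p v (lam : R), 0 < lam -> F p (fun i => lam * v i) = lam * F p v.

Local Notation G := (uncurry F).

Let G_d d z : slit z ->
  derivable_pt_lim (fun t => G (upd z d t)) (coord z d) (ipder G [:: d] z).
Proof. exact: (F_smooth [::]).2. Qed.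

Lemma dxdy_expand a b z : slit z ->
  dxdy F a b z = 2 * ipder G [:: inl a] z * ipder G [:: inr b] z
                  + 2 * G z * ipder G [:: inl a; inr b] z.
Proof.
move=> z_slit.
have dy_Fsq w : slit w -> pder (Fsq F) (inr b) w = 2 * G w * ipder G [:: inr b] w.
  by move=> /(G_d (inr b)) /derivable_pt_lim_sqr; rewrite (upd_coord w (inr b)); apply: pder_eq.
apply: pder_eq; apply: (derivable_pt_lim_ext (fun t =>
  2 * G (upd z (inl a) t) * ipder G [:: inr b] (upd z (inl a) t))); first by move=> t; rewrite dy_Fsq.
have := derivable_pt_lim_mult _ _ _ _ _
  (derivable_pt_lim_scal _ 2 _ _ (G_d (inl a) z_slit)) ((F_smooth [:: inr b]).2 (inl a) z z_slit).
by rewrite /mult_real_fct (upd_coord z (inl a)).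
Qed.

(* Differentiate [t |-> F(x, (1 + t) y) = (1 + t) F(x, y)] at [t = 0]. *)
Lemma euler_y z : slit z -> sumI (fun k => z.2 k * ipder G [:: inr k] z) = G z.
Proof.
move=> z_slit; apply: (uniqueness_limite (fun t => (1 + t) * G z) 0).
  apply: (derivable_pt_lim_ext_loc Rlt_0_1 _
    (derivable_pt_lim_fibre_shift (fun k => G_d (inr k)) (fun k => (F_smooth [:: inr k]).1)
                                  z.2 z_slit)).
  move=> t; rewrite Rminus_0_r => /Rabs_def2 t_gt; rewrite /uncurry /= -F_hom; last lra.
  by congr (F _ _); apply: functional_extensionality => j; ring.
by apply/is_derive_Reals; auto_derive => //; ring.
Qed.

Lemma euler_y_dx z i : slit z ->
  sumI (fun k => z.2 k * ipder G [:: inl i; inr k] z) = ipder G [:: inl i] z.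
Proof.
move=> z_slit; apply: (uniqueness_limite (fun t => G (upd z (inl i) t)) (coord z (inl i)));
  last exact: G_d.
apply: (derivable_pt_lim_ext
  (fun t => sumI (fun k => z.2 k * ipder G [:: inr k] (upd z (inl i) t)))).
  by move=> t; apply: (euler_y (z := upd z (inl i) t)).
apply: derivable_pt_lim_sumI => k.
exact: derivable_pt_lim_scal ((F_smooth [:: inr k]).2 (inl i) z z_slit).
Qed.

Section Converse.
Hypothesis F_pos : forall p v, v <> (fun _ => 0) -> 0 < F p v.
Hypothesis dxdy_cond : forall (p v : vec n), v <> (fun _ => 0) -> forall i,
  sumI (fun k => dxdy F k i (p, v) * v k) = 1 / 2 * sumI (fun k => dxdy F i k (p, v) * v k).

Let S z := sumI (fun k => z.2 k * ipder G [:: inl k] z).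

Let dxdy_cond_expanded z i : slit z ->
  ipder G [:: inr i] z * S z + G z * sumI (fun k => z.2 k * ipder G [:: inl k; inr i] z)
  = G z * ipder G [:: inl i] z.
Proof.
case: z => p v z_slit; have := @dxdy_cond p v z_slit i.
rewrite (eq_sumI (g := fun k => 2 * ipder G [:: inr i] (p, v) * (v k * ipder G [:: inl k] (p, v))
                              + 2 * G (p, v) * (v k * ipder G [:: inl k; inr i] (p, v)))); last first.
  by move=> k; rewrite dxdy_expand //; ring.
rewrite (eq_sumI (f := fun k => dxdy F i k (p, v) * v k)
   (g := fun k => 2 * ipder G [:: inl i] (p, v) * (v k * ipder G [:: inr k] (p, v))
                + 2 * G (p, v) * (v k * ipder G [:: inl i; inr k] (p, v)))); last first.
  by move=> k; rewrite dxdy_expand //; ring.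
rewrite !sumI_add !sumI_scal (euler_y z_slit) (euler_y_dx i z_slit) /S /=; lra.
Qed.

Let S_eq0 z : slit z -> S z = 0.
Proof.
move=> z_slit; have G_pos : 0 < G z := @F_pos z.1 z.2 z_slit.
have : sumI (fun i => z.2 i * (ipder G [:: inr i] z * S z
                           + G z * sumI (fun k => z.2 k * ipder G [:: inl k; inr i] z)))
     = sumI (fun i => z.2 i * (G z * ipder G [:: inl i] z)).
  by apply: eq_sumI => i; rewrite dxdy_cond_expanded.
rewrite (eq_sumI (g := fun i => S z * (z.2 i * ipder G [:: inr i] z)
   + G z * (z.2 i * sumI (fun k => z.2 k * ipder G [:: inl k; inr i] z)))); last by move=> i; ring.
rewrite sumI_add !sumI_scal euler_y // sumI_exchange_weighted.
under eq_sumI => k do rewrite euler_y_dx //.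
rewrite (eq_sumI (f := fun i => z.2 i * (G z * _))
                 (g := fun i => G z * (z.2 i * ipder G [:: inl i] z))); last by move=> i; ring.
rewrite sumI_scal -/(S z); nra.
Qed.

Let S_dy z i : slit z ->
  ipder G [:: inl i] z + sumI (fun k => z.2 k * ipder G [:: inr i; inl k] z) = 0.
Proof.
move=> z_slit; have [del [del_gt0 del_slit]] := slit_nbhd z_slit.
rewrite -(sumI_delta (fun k => ipder G [:: inl k] z) i) -sumI_add.
apply: (uniqueness_limite (fun t => S (upd z (inr i) t)) (coord z (inr i))).
  apply: derivable_pt_lim_sumI => k.
  have y_k : derivable_pt_lim (fun t => (upd z (inr i) t).2 k) (coord z (inr i))
                              (if k == i then 1 else 0).
    by rewrite /=; case: eqP => _; [exact: derivable_pt_lim_id | exact: derivable_pt_lim_const].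
  have := derivable_pt_lim_mult _ _ _ _ _ y_k ((F_smooth [:: inl k]).2 (inr i) z z_slit).
  by rewrite /mult_fct (upd_coord z (inr i)); case: eqP => _;
    rewrite ?Rmult_1_l ?Rmult_0_l ?Rplus_0_l.
apply: (@derivable_pt_lim_ext_loc (fun _ => 0) _ _ _ _ del_gt0); last exact: derivable_pt_lim_const.
move=> t t_near; rewrite S_eq0 //; apply: del_slit => j /=.
by case: eqP => [->//|_]; rewrite Rminus_diag Rabs_R0.
Qed.

Lemma ipder_x_eq0 z i : slit z -> ipder G [:: inl i] z = 0.
Proof.
move=> z_slit; have G_pos : 0 < G z := @F_pos z.1 z.2 z_slit.
have yx : sumI (fun k => z.2 k * ipder G [:: inl k; inr i] z) = - ipder G [:: inl i] z.
  have := S_dy i z_slit.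
  under eq_sumI => k do rewrite (ipder_comm_y_x k i F_smooth z_slit).
  lra.
have := dxdy_cond_expanded i z_slit; rewrite S_eq0 // yx; nra.
Qed.

End Converse.

End Finsler.

Lemma homogeneous_at0 n (F : vec n -> vec n -> R) :
  (forall p v (lam : R), 0 < lam -> F p (fun i => lam * v i) = lam * F p v) ->
  forall p, F p (fun _ => 0) = 0.
Proof.
move=> F_hom p; have := F_hom p (fun _ => 0) 2 Rlt_0_2.
rewrite (_ : (fun i : 'I_n => 2 * 0) = fun _ => 0); first lra.
by apply: functional_extensionality => i; ring.
Qed.

Lemma is_minkowski_of_dx0 n (F : vec n -> vec n -> R) :
  (forall p v (lam : R), 0 < lam -> F p (fun i => lam * v i) = lam * F p v) ->
  (forall z i, slit z ->
     derivable_pt_lim (fun t => uncurry F (upd z (inl i) t)) (coord z (inl i)) 0) ->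
  is_minkowski F.
Proof.
move=> F_hom dx0 p q v.
case: (classic (v = fun _ => 0)) => [->|v_neq0]; first by rewrite !homogeneous_at0.
rewrite (sumI_mixv_telescope (fun x => F x v) p q) /sumI big1 ?Rplus_0_r // => o _.
have : uncurry F (upd (mixv o p q, v) (inl o) (q o))
       = uncurry F (upd (mixv o p q, v) (inl o) (p o)).
  apply: (derivable_pt_lim0_const (f := fun t => uncurry F (upd (mixv o p q, v) (inl o) t))) => t.
  have := dx0 (upd (mixv o p q, v) (inl o) t) o v_neq0.
  by rewrite coord_upd; apply: derivable_pt_lim_ext => s; rewrite upd_upd.
by rewrite upd_mixvS_l upd_mixv_at_l /uncurry /= => ->; ring.
Qed.

Lemma dxdy_eq0_of_minkowski n (F : vec n -> vec n -> R) a b z :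
  is_minkowski F -> dxdy F a b z = 0.
Proof.
move=> mink; apply: pder_eq.
apply: (derivable_pt_lim_ext (fun _ => pder (Fsq F) (inr b) z)); last exact: derivable_pt_lim_const.
move=> t; rewrite /pder.
have -> // : (fun s => Fsq F (upd (upd z (inl a) t) (inr b) s)) = (fun s => Fsq F (upd z (inr b) s)).
by apply: functional_extensionality => s; rewrite /Fsq /= (mink _ z.1).
Qed.

Theorem mainTheorem9 (n : nat) (F : vec n -> vec n -> R) :
  is_finsler F ->
  (is_minkowski F <->
   (forall (p v : vec n), v <> (fun _ => 0%R) ->
      forall i : 'I_n,
        sumI (fun k => (dxdy F k i (p, v) * v k)%R) =
        (1 / 2 * sumI (fun k => dxdy F i k (p, v) * v k))%R)).
Proof.
move=> [F_smooth [F_pos [F_hom _]]]; split=> [mink p v _ i | dxdy_cond].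
  rewrite /sumI !big1 => [|k _|k _]; rewrite ?dxdy_eq0_of_minkowski ?Rmult_0_l //; ring.
apply: (is_minkowski_of_dx0 F_hom) => z i z_slit.
have := (F_smooth [::]).2 (inl i) z z_slit.
by rewrite (ipder_x_eq0 F_smooth F_hom F_pos dxdy_cond i z_slit).
Qed.
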